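(* Let $G$ be a finite simple connected graph and $w$ a non-negative real function on the edges of $G$. Let $d_s$ be the shortest-path distance on the vertices of $G$, and define $\pi(u,u)=0$ and, for distinct vertices $u,v$, \[\pi(u,v) = \min\left\{ \frac{p(\gamma)}{p(\gamma)+1} : \gamma \text{ is a shortest path between } u \text{ and } v\right\},\] where $p(\gamma) = \prod_{e \in \gamma} w(e)$. Then $d^{\pi}_w := d_s + \pi$ is a metric on the vertex set of $G$ that refines $d_s$.
   Context: Metrics on a vertex set $V$ are regarded as functions on $V \times V$. For functions $f,f'\colon V\times V \to \mathbb{R}$, $f'$ refines $f$ if for all pairs $(x_1,x_2),(x_1',x_2') \in V\times V$ that agree in at least one coordinate, $f(x_1,x_2) < f(x_1',x_2')$ implies $f'(x_1,x_2) < f'(x_1',x_2')$. *)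

From HB Require Import structures.
From mathcomp Require Import all_boot all_order all_algebra.
From mathcomp Require Import reals.
Set Implicit Arguments. Unset Strict Implicit. Unset Printing Implicit Defensive.
Import Order.TTheory GRing.Theory Num.Theory.
Local Open Scope ring_scope.

(* A finite simple graph: vertex type V : finType, edge relation e : rel V,
   symmetric and irreflexive.  Edges are the 2-sets [set u; v] with e u v. *)
Definition simple_graph (V : finType) (e : rel V) : Prop :=
  symmetric e /\ irreflexive e.

Definition connected_graph (V : finType) (e : rel V) : Prop :=
  forall u v : V, connect e u v.

(* A walk from u to v: the sequence of vertices after u. *)
Definition walkb (V : finType) (e : rel V) (u v : V) (p : seq V) : bool :=
  path e u p && (last u p == v).

(* Shortest-path distance: least n such that a walk with n edges from u to v
   exists.  In a connected graph such n is < #|V|, so searching [0, #|V|)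
   suffices. *)
Definition dist_s (V : finType) (e : rel V) (u v : V) : nat :=
  find (fun n => [exists p : n.-tuple V, walkb e u v p]) (iota 0 #|V|).

Definition pathprod (R : realType) (V : finType) (w : {set V} -> R)
    (u : V) (p : seq V) : R :=
  \prod_(ab <- zip (u :: p) p) w [set ab.1; ab.2].

(* Since w >= 0 every value p/(p+1) lies in [0,1), so using 1 as the neutral
   element of the iterated minimum does not change the (nonempty) minimum. *)
Definition pi_w (R : realType) (V : finType) (e : rel V) (w : {set V} -> R)
    (u v : V) : R :=
  if u == v then 0 else
  \big[Num.min/1]_(p : (dist_s e u v).-tuple V | walkb e u v p)
     (pathprod w u p / (pathprod w u p + 1)).

Definition d_pi (R : realType) (V : finType) (e : rel V) (w : {set V} -> R)
    (u v : V) : R :=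
  (dist_s e u v)%:R + pi_w e w u v.

Definition is_metric (R : realType) (V : Type) (d : V -> V -> R) : Prop :=
  (forall x y, 0 <= d x y) /\
  (forall x y, d x y = 0 <-> x = y) /\
  (forall x y, d x y = d y x) /\
  (forall x y z, d x z <= d x y + d y z).

Definition refines (R : realType) (V : Type) (f f' : V -> V -> R) : Prop :=
  forall x1 x2 x1' x2' : V, (x1 = x1' \/ x2 = x2') ->
    f x1 x2 < f x1' x2' -> f' x1 x2 < f' x1' x2'.

(* The shortest-path distance d_s is an integer-valued metric and pi takes
   values in [0, 1), so d_s + pi refines d_s, is positive off the diagonal and
   satisfies the triangle inequality strictly whenever that of d_s is strict.
   In the tight case d_s(x,z) = d_s(x,y) + d_s(y,z), concatenating shortest
   paths from x to y and from y to z gives a shortest path from x to z, whose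
   weight is the product of the two weights; so the tight case reduces to
   f(ab) <= f(a) + f(b) for f(t) = t/(t+1) and a, b >= 0. *)
From HB Require Import structures.
From mathcomp Require Import all_boot all_order all_algebra.
From mathcomp Require Import reals.
From mathcomp Require Import ring lra.
Set Implicit Arguments.
Unset Strict Implicit.
Unset Printing Implicit Defensive.
Import Order.TTheory GRing.Theory Num.Theory.
Local Open Scope ring_scope.

Section IntegerMetricPerturbation.
Variables (R : realType) (V : Type) (d : V -> V -> nat) (p : V -> V -> R).
Hypothesis p_ge0 : forall x y, 0 <= p x y.
Hypothesis p_lt1 : forall x y, p x y < 1.

Let dp x y := (d x y)%:R + p x y.

Lemma refines_natD_frac : refines (fun x y => (d x y)%:R) dp.
Proof.
move=> x1 x2 x1' x2' _; rewrite ltr_nat -addn1 => lt_d.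
have : (d x1 x2 + 1)%:R <= (d x1' x2')%:R :> R by rewrite ler_nat.
rewrite natrD /dp; have := p_ge0 x1' x2'; have := p_lt1 x1 x2; lra.
Qed.

Lemma is_metric_natD_frac :
  (forall x y, d x y = 0%N <-> x = y) ->
  (forall x y, d x y = d y x) -> (forall x y, p x y = p y x) ->
  (forall x y z, (d x z <= d x y + d y z)%N) ->
  (forall x, p x x = 0) ->
  (forall x y z, d x z = (d x y + d y z)%N -> p x z <= p x y + p y z) ->
  is_metric dp.
Proof.
move=> d0 dC pC d_tri p0 p_tri; split; last split; last split.
- by move=> x y; rewrite /dp addr_ge0.
- move=> x y; split => [dp0|eq_xy].
    apply/(d0 x y)/eqP; rewrite -(pnatr_eq0 R) eq_le ler0n andbT.
    by move: dp0; rewrite /dp; have := p_ge0 x y; lra.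
  by rewrite /dp (proj2 (d0 x y) eq_xy) eq_xy p0 addr0.
- by move=> x y; rewrite /dp dC pC.
move=> x y z; rewrite /dp.
have := p_ge0 x y; have := p_ge0 y z; have := p_lt1 x z.
have := d_tri x y z; rewrite leq_eqVlt => /orP[/eqP tight | lt_d].
  by rewrite tight natrD; have := p_tri x y z tight; lra.
have : (d x z + 1)%:R <= (d x y + d y z)%:R :> R by rewrite ler_nat addn1.
rewrite !natrD; lra.
Qed.

End IntegerMetricPerturbation.

Section ShortestPathDistance.
Variables (V : finType) (e : rel V).

Lemma walk_tupleP n u v :
  reflect (exists p : seq V, size p = n /\ walkb e u v p)
          [exists p : n.-tuple V, walkb e u v p].
Proof.
apply: (iffP existsP) => [[p walk_p]|[p [<- walk_p]]].
  by exists (val p); rewrite size_tuple.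
by exists (in_tuple p).
Qed.

Lemma walkb_cat u v x p q :
  walkb e u v p -> walkb e v x q -> walkb e u x (p ++ q).
Proof.
case/andP=> path_p /eqP last_p /andP[path_q last_q].
by rewrite /walkb cat_path last_cat last_p path_p path_q.
Qed.

Lemma walkb_rev u v p :
  symmetric e -> walkb e u v p -> walkb e v u (rev (belast u p)).
Proof.
move=> e_sym /andP[path_p /eqP <-]; apply/andP; split.
  by rewrite rev_path; apply: sub_path path_p => x y; rewrite e_sym.
by case: p path_p => [|y p] //= _; rewrite rev_cons last_rcons.
Qed.

Lemma dist_s_le_size u v p : walkb e u v p -> (dist_s e u v <= size p)%N.
Proof.
move=> walk_p; rewrite leqNgt; apply/negP => lt_p.
have lt_card : (size p < #|V|)%N.
  by apply: leq_trans lt_p _; rewrite /dist_s -[leqRHS](size_iota 0 #|V|) find_size.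
have := before_find 0 lt_p; rewrite nth_iota // add0n.
by move/negbT/negP; apply; apply/walk_tupleP; exists p.
Qed.

Lemma dist_s_refl u : dist_s e u u = 0%N.
Proof. by apply/eqP; rewrite -leqn0 (@dist_s_le_size u u [::]) // /walkb eqxx. Qed.

Hypothesis e_conn : connected_graph e.

Lemma exists_walk_lt_card u v : exists2 p, (size p < #|V|)%N & walkb e u v p.
Proof.
have /connectP[p path_p ->] := e_conn u v.
have [q path_q uniq_q _] := shortenP path_p.
exists q; last by rewrite /walkb path_q eqxx.
by move/card_uniqP: uniq_q => /= <-; apply: max_card.
Qed.

Lemma exists_shortest_walk u v :
  exists2 p, size p = dist_s e u v & walkb e u v p.
Proof.
have [q lt_q walk_q] := exists_walk_lt_card u v.
set P := fun n => [exists p : n.-tuple V, walkb e u v p].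
have has_P : has P (iota 0 #|V|).
  by apply/hasP; exists (size q); [rewrite mem_iota | apply/walk_tupleP; exists q].
have := nth_find 0 has_P; rewrite has_find size_iota in has_P.
by rewrite nth_iota // add0n => /walk_tupleP[p [size_p walk_p]]; exists p.
Qed.

Lemma dist_s_eq0 u v : dist_s e u v = 0%N <-> u = v.
Proof.
split=> [d0|<-]; last exact: dist_s_refl.
have [p size_p /andP[_ /eqP <-]] := exists_shortest_walk u v.
by move: size_p; rewrite d0 => /size0nil ->.
Qed.

Lemma dist_s_triangle u v x : (dist_s e u x <= dist_s e u v + dist_s e v x)%N.
Proof.
have [p <- walk_p] := exists_shortest_walk u v.
have [q <- walk_q] := exists_shortest_walk v x.
by rewrite -size_cat dist_s_le_size // (walkb_cat walk_p walk_q).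
Qed.

Hypothesis e_sym : symmetric e.

Lemma dist_s_sym u v : dist_s e u v = dist_s e v u.
Proof.
suff le_d a b : (dist_s e a b <= dist_s e b a)%N by apply/eqP; rewrite eqn_leq !le_d.
have [p <- walk_p] := exists_shortest_walk b a.
by rewrite -(size_belast b) -size_rev dist_s_le_size // walkb_rev.
Qed.

End ShortestPathDistance.

Section PathWeight.
Variables (R : realType) (V : finType) (w : {set V} -> R).

Lemma pathprod_cons u y p : pathprod w u (y :: p) = w [set u; y] * pathprod w y p.
Proof. by rewrite /pathprod big_cons. Qed.

Lemma pathprod_cat u p q :
  pathprod w u (p ++ q) = pathprod w u p * pathprod w (last u p) q.
Proof.
elim: p u => [|y p IHp] u; first by rewrite /pathprod big_nil mul1r.
by rewrite cat_cons !pathprod_cons IHp mulrA.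
Qed.

Lemma pathprod_rev u p : pathprod w (last u p) (rev (belast u p)) = pathprod w u p.
Proof.
elim: p u => [|y p IHp] u //=.
have last_rev : last (last y p) (rev (belast y p)) = y.
  by case: p {IHp} => [|z p] //=; rewrite rev_cons last_rcons.
rewrite rev_cons -cats1 pathprod_cat IHp last_rev !pathprod_cons.
by rewrite /pathprod big_nil mulr1 mulrC setUC.
Qed.

Lemma pathprod_ge0 (e : rel V) u p :
  (forall x y, e x y -> 0 <= w [set x; y]) -> path e u p -> 0 <= pathprod w u p.
Proof.
move=> w_ge0; elim: p u => [|y p IHp] u /=; first by rewrite /pathprod big_nil.
by case/andP=> e_uy path_p; rewrite pathprod_cons mulr_ge0 ?w_ge0 ?IHp.
Qed.

End PathWeight.

Section OddsToProbability.
Variable R : realFieldType.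

Definition odds_prob (t : R) := t / (t + 1).

Lemma odds_prob_ge0 t : 0 <= t -> 0 <= odds_prob t.
Proof. by move=> t_ge0; rewrite divr_ge0 ?addr_ge0. Qed.

Lemma odds_prob_lt1 t : 0 <= t -> odds_prob t < 1.
Proof. by move=> t_ge0; rewrite ltr_pdivrMr ?mul1r ?ltrDl // ltr_wpDl. Qed.

Lemma odds_probM_le a b :
  0 <= a -> 0 <= b -> odds_prob (a * b) <= odds_prob a + odds_prob b.
Proof.
move=> a_ge0 b_ge0; rewrite /odds_prob -subr_ge0.
have succ_neq0 t : 0 <= t -> t + 1 != 0 by move=> t_ge0; rewrite gt_eqF // ltr_wpDl.
have -> : a / (a + 1) + b / (b + 1) - a * b / (a * b + 1) =
    (a * a * b * b + a * b + a + b) / ((a + 1) * (b + 1) * (a * b + 1)).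
  by field; rewrite !succ_neq0 ?mulr_ge0.
by rewrite divr_ge0 ?mulr_ge0 ?addr_ge0 ?mulr_ge0.
Qed.

End OddsToProbability.

Section ShortestPathPenalty.
Variables (R : realType) (V : finType) (e : rel V) (w : {set V} -> R).
Hypothesis e_sym : symmetric e.
Hypothesis e_conn : connected_graph e.
Hypothesis w_ge0 : forall u v : V, e u v -> 0 <= w [set u; v].

Let pi := pi_w e w.

Lemma pi_w_refl u : pi u u = 0.
Proof. by rewrite /pi /pi_w eqxx. Qed.

Lemma pi_w_le_shortest u v p : u != v -> walkb e u v p ->
  size p = dist_s e u v -> pi u v <= odds_prob (pathprod w u p).
Proof.
move=> /negbTE neq_uv walk_p /eqP size_p; rewrite /pi /pi_w neq_uv.
exact: (@bigmin_le_cond _ _ _ 1 (Tuple size_p)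
  (fun q : (dist_s e u v).-tuple V => walkb e u v q) _ walk_p).
Qed.

Lemma pi_w_attained u v : u != v -> exists p,
  [/\ walkb e u v p, size p = dist_s e u v & pi u v = odds_prob (pathprod w u p)].
Proof.
move=> /negbTE neq_uv; rewrite /pi /pi_w neq_uv.
have [p /eqP size_p walk_p] := exists_shortest_walk e_conn u v.
have [q walk_q ->] := eq_bigmin (Tuple size_p)
  (fun q : (dist_s e u v).-tuple V => walkb e u v q)
  (fun q => pathprod w u q / (pathprod w u q + 1)) walk_p
  (fun q walk_q => ltW (odds_prob_lt1 (pathprod_ge0 w_ge0 (proj1 (andP walk_q))))).
by exists (val q); rewrite size_tuple.
Qed.

Lemma pi_w_ge0 u v : 0 <= pi u v.
Proof.
have [<-|neq_uv] := eqVneq u v; first by rewrite pi_w_refl.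
have [p [/andP[path_p _] _ ->]] := pi_w_attained neq_uv.
exact/odds_prob_ge0/(pathprod_ge0 w_ge0 path_p).
Qed.

Lemma pi_w_lt1 u v : pi u v < 1.
Proof.
have [<-|neq_uv] := eqVneq u v; first by rewrite pi_w_refl ltr01.
have [p [/andP[path_p _] _ ->]] := pi_w_attained neq_uv.
exact/odds_prob_lt1/(pathprod_ge0 w_ge0 path_p).
Qed.

Lemma pi_w_sym u v : pi u v = pi v u.
Proof.
suff le_pi a b : pi a b <= pi b a by apply/eqP; rewrite eq_le !le_pi.
have [<-|neq_ab] := eqVneq a b; first by [].
rewrite eq_sym in neq_ab.
have [p [walk_p size_p ->]] := pi_w_attained neq_ab.
rewrite -pathprod_rev (eqP (proj2 (andP walk_p))) pi_w_le_shortest 1?eq_sym //.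
  exact: walkb_rev.
by rewrite size_rev size_belast size_p dist_s_sym.
Qed.

Lemma pi_w_triangle_tight x y z :
  dist_s e x z = (dist_s e x y + dist_s e y z)%N -> pi x z <= pi x y + pi y z.
Proof.
move=> tight.
have [<-|neq_xy] := eqVneq x y; first by rewrite pi_w_refl add0r.
have [<-|neq_yz] := eqVneq y z; first by rewrite pi_w_refl addr0.
have [<-|neq_xz] := eqVneq x z; first by rewrite pi_w_refl addr_ge0 ?pi_w_ge0.
have [p [walk_p size_p ->]] := pi_w_attained neq_xy.
have [q [walk_q size_q ->]] := pi_w_attained neq_yz.
have /(pi_w_le_shortest neq_xz) := walkb_cat walk_p walk_q.
rewrite size_cat size_p size_q -tight => /(_ erefl) /le_trans; apply.
case/andP: walk_p => path_p /eqP last_p; case/andP: walk_q => path_q _.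
by rewrite pathprod_cat last_p odds_probM_le // (pathprod_ge0 w_ge0).
Qed.

End ShortestPathPenalty.

Theorem proposition5 (R : realType) (V : finType) (e : rel V) (w : {set V} -> R) :
  simple_graph e -> connected_graph e ->
  (forall u v : V, e u v -> 0 <= w [set u; v]) ->
  is_metric (d_pi e w) /\
  refines (fun u v : V => ((dist_s e u v)%:R : R)) (d_pi e w).
Proof.
move=> [e_sym _] e_conn w_ge0.
have pi_ge0 := pi_w_ge0 e_conn w_ge0; have pi_lt1 := pi_w_lt1 e_conn w_ge0.
split; last exact: refines_natD_frac.
apply: is_metric_natD_frac => //.
- exact: dist_s_eq0.
- exact: dist_s_sym.
- exact: pi_w_sym.
- exact: dist_s_triangle.
- exact: pi_w_refl.
- exact: pi_w_triangle_tight.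
Qed.
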